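(* Let $A\in\mathbb{C}^{N\times N}$ have separation index $I_s(A)=1$. Then the real Lie algebra generated by $A-A^\dagger$, $iA+iA^\dagger$ and $i[A,A^\dagger]$ is isomorphic to $\mathfrak{su}(2)$.
   Context: $\mathfrak{u}(N)$ is the real Lie algebra of skew-Hermitian $N\times N$ matrices. For $\Omega\in\mathfrak{u}(N)$ and $\varphi\in\mathbb{R}$, let $E_\varphi(\Omega)=\{X\in\mathbb{C}^{N\times N}\mid \Omega X-X\Omega=i\varphi X\}$ (a complex subspace). The separation index of $A$ is $I_s(A)=\min\{\dim_{\mathbb{C}}E_\varphi(\Omega)\mid A\in E_\varphi(\Omega),\ \Omega\in\mathfrak{u}(N),\ \varphi\in\mathbb{R},\ \varphi\neq 0\}$ (and $I_s(A)=-\infty$ if there is no such pair). $[X,Y]=XY-YX$. *)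

From HB Require Import structures.
From mathcomp Require Import all_boot all_order all_algebra.
From mathcomp Require Import reals complex.
Set Implicit Arguments. Unset Strict Implicit. Unset Printing Implicit Defensive.
Import Order.TTheory GRing.Theory Num.Theory.
Local Open Scope ring_scope.
Local Open Scope complex_scope.

Section Defs.
Variable R : realType.
Local Notation C := R[i].

Definition adjmx (n : nat) (A : 'M[C]_n) : 'M[C]_n := (map_mx Num.conj A)^T.

Definition lie_br (n : nat) (X Y : 'M[C]_n) : 'M[C]_n := X *m Y - Y *m X.

Definition skew_herm (n : nat) (X : 'M[C]_n) : Prop := adjmx X = - X.

Definition Espace (n : nat) (Om : 'M[C]_n) (phi : R) : {vspace 'M[C]_n} :=
  lker (linfun (fun X : 'M[C]_n => Om *m X - X *m Om - ('i * phi%:C) *: X)).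

Definition sep_admissible (n : nat) (A Om : 'M[C]_n) (phi : R) : Prop :=
  skew_herm Om /\ phi != 0 /\ A \in Espace Om phi.

(* I_s(A) = k  (k a natural number): k is the minimum of dim_C E_phi(Omega)
   over admissible pairs (in particular, the set of admissible pairs is
   nonempty, so I_s(A) <> -oo). *)
Definition sep_index_eq (n : nat) (A : 'M[C]_n) (k : nat) : Prop :=
  (exists Om phi, sep_admissible A Om phi /\ \dim (Espace Om phi) = k) /\
  (forall Om phi, sep_admissible A Om phi -> (k <= \dim (Espace Om phi))%N).

Definition real_lie_subalg (n : nat) (S : 'M[C]_n -> Prop) : Prop :=
  S 0 /\
  (forall X Y, S X -> S Y -> S (X + Y)) /\
  (forall (r : R) X, S X -> S (r%:C *: X)) /\
  (forall X Y, S X -> S Y -> S (lie_br X Y)).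

Definition gen_real_lie (n : nat) (G : 'M[C]_n -> Prop) (X : 'M[C]_n) : Prop :=
  forall S, real_lie_subalg S -> (forall Y, G Y -> S Y) -> S X.

Definition su2 (X : 'M[C]_2) : Prop := skew_herm X /\ \tr X = 0.

Definition real_lie_iso (n m : nat) (L : 'M[C]_n -> Prop) (M : 'M[C]_m -> Prop)
  : Prop :=
  exists f : 'M[C]_n -> 'M[C]_m,
    (forall X, L X -> M (f X)) /\
    (forall X Y, L X -> L Y -> f X = f Y -> X = Y) /\
    (forall Z, M Z -> exists X, L X /\ f X = Z) /\
    (forall (r s : R) X Y, L X -> L Y ->
        f (r%:C *: X + s%:C *: Y) = r%:C *: f X + s%:C *: f Y) /\
    (forall X Y, L X -> L Y -> f (lie_br X Y) = lie_br (f X) (f Y)).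

End Defs.

From HB Require Import structures.
From mathcomp Require Import all_boot all_order all_algebra.
From mathcomp Require Import reals complex ring.
Import Order.TTheory GRing.Theory Num.Theory.
Set Implicit Arguments. Unset Strict Implicit. Unset Printing Implicit Defensive.
Local Open Scope complex_scope.
Local Open Scope ring_scope.

(* If I_s(A) = 1, some admissible E_phi(Om) is the line CA.  As E_phi E_psi lies
   in E_(phi + psi), Om lies in E_0 and A^dagger in E_(-phi), both A Om and
   A A^dagger A lie in CA: comparing A (Om A) with (A Om) A gives A^2 = 0, and
   A A^dagger A = mu A with mu > 0 by positivity of tr (X X^dagger).  Then
   H = [A, A^dagger] satisfies [A, H] = -2 mu A and [A^dagger, H] = 2 mu A^dagger,
   so A, A^dagger, H span a copy of sl(2, C) whose real form generated by the
   three given matrices is {u A - u^* A^dagger + w H | w imaginary}.  The 2x2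
   matrix sqrt(mu) E_12 satisfies the same relations and its real form is su(2);
   transporting coefficients, read off by the traces against A^dagger, A and H,
   gives the isomorphism. *)

Lemma matrix2P (T : Type) (X Y : 'M[T]_2) :
  X 0 0 = Y 0 0 -> X 0 1 = Y 0 1 -> X 1 0 = Y 1 0 -> X 1 1 = Y 1 1 -> X = Y.
Proof.
have ord2 (k : 'I_2) : k = 0 \/ k = 1 by case: k => [[|[|//]] ?]; [left | right]; apply: val_inj.
move=> E00 E01 E10 E11; apply/matrixP => i j.
by case: (ord2 i) (ord2 j) => -> [] ->.
Qed.

Lemma mxtrace2 (V : nmodType) (X : 'M[V]_2) : \tr X = X 0 0 + X 1 1.
Proof. by rewrite /mxtrace big_ord_recl big_ord1; congr (_ + X _ _); apply: val_inj. Qed.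

Section Theory.
Variable R : realType.
Local Notation C := R[i].

Lemma conjC_real_complex (r : R) : (r%:C)^* = r%:C.
Proof. by apply: conj_Creal; apply/complex_realP; exists r. Qed.

Lemma adjmx0 n : adjmx (0 : 'M[C]_n) = 0.
Proof. by apply/matrixP=> i j; rewrite !mxE rmorph0. Qed.

Lemma adjmxD n (X Y : 'M[C]_n) : adjmx (X + Y) = adjmx X + adjmx Y.
Proof. by apply/matrixP=> i j; rewrite !mxE rmorphD. Qed.

Lemma adjmxB n (X Y : 'M[C]_n) : adjmx (X - Y) = adjmx X - adjmx Y.
Proof. by apply/matrixP=> i j; rewrite !mxE rmorphB. Qed.

Lemma adjmxK n : involutive (@adjmx R n).
Proof. by move=> X; apply/matrixP=> i j; rewrite !mxE conjCK. Qed.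

Lemma adjmxM n (X Y : 'M[C]_n) : adjmx (X *m Y) = adjmx Y *m adjmx X.
Proof. by rewrite /adjmx map_mxM trmx_mul. Qed.

Lemma adjmxZ n (c : C) (X : 'M[C]_n) : adjmx (c *: X) = c^* *: adjmx X.
Proof. by apply/matrixP=> i j; rewrite !mxE rmorphM. Qed.

Lemma mxtrace_mul_adjmx n (X : 'M[C]_n) :
  \tr (X *m adjmx X) = \sum_i \sum_j X i j * (X i j)^*.
Proof. by apply: eq_bigr => i _; rewrite mxE; apply: eq_bigr => j _; rewrite !mxE. Qed.

Lemma mxtrace_mul_adjmx_ge0 n (X : 'M[C]_n) : 0 <= \tr (X *m adjmx X).
Proof.
by rewrite mxtrace_mul_adjmx sumr_ge0 // => i _; rewrite sumr_ge0 // => j _; apply: mul_conjC_ge0.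
Qed.

Lemma mxtrace_mul_adjmx_gt0 n (X : 'M[C]_n) : X != 0 -> 0 < \tr (X *m adjmx X).
Proof.
have conj_ge0 (z : C) : 0 <= z * z^* by apply: mul_conjC_ge0.
apply: contraNT; rewrite lt_def mxtrace_mul_adjmx_ge0 andbT negbK mxtrace_mul_adjmx.
rewrite psumr_eq0 => [/allP X0|i _]; last exact: sumr_ge0.
apply/eqP/matrixP=> i j; have := X0 i (mem_index_enum _).
rewrite psumr_eq0 // => /allP/(_ j (mem_index_enum _)).
by rewrite -normCK sqrf_eq0 normr_eq0 mxE => /eqP.
Qed.

Section Commutator.
Variable n : nat.
Implicit Types X Y Z : 'M[C]_n.

Lemma lie_brDl X Y Z : lie_br (X + Y) Z = lie_br X Z + lie_br Y Z.
Proof. by rewrite /lie_br mulmxDl mulmxDr opprD addrACA. Qed.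

Lemma lie_brDr X Y Z : lie_br Z (X + Y) = lie_br Z X + lie_br Z Y.
Proof. by rewrite /lie_br mulmxDl mulmxDr opprD addrACA. Qed.

Lemma lie_brZl c X Y : lie_br (c *: X) Y = c *: lie_br X Y.
Proof. by rewrite /lie_br scalerBr scalemxAl scalemxAr. Qed.

Lemma lie_brZr c X Y : lie_br X (c *: Y) = c *: lie_br X Y.
Proof. by rewrite /lie_br scalerBr scalemxAr scalemxAl. Qed.

Lemma lie_brC X Y : lie_br X Y = - lie_br Y X.
Proof. by rewrite /lie_br opprB. Qed.

Lemma lie_brxx X : lie_br X X = 0.
Proof. exact: subrr. Qed.

Lemma mxtrace_lie_br X Y : \tr (lie_br X Y) = 0.
Proof. by rewrite raddfB /= mxtrace_mulC subrr. Qed.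

Lemma adjmx_lie_br X Y : adjmx (lie_br X Y) = lie_br (adjmx Y) (adjmx X).
Proof. by rewrite adjmxB !adjmxM. Qed.

End Commutator.

Section Eigenspace.
Variables (n : nat) (Om : 'M[C]_n).

Definition eig_shift (phi : R) (X : 'M[C]_n) := Om *m X - X *m Om - ('i * phi%:C) *: X.

Lemma eig_shift_is_linear phi : linear (eig_shift phi).
Proof.
move=> a X Y; rewrite /eig_shift mulmxDr mulmxDl !scalerBr scalerDr.
rewrite scalemxAr scalemxAl !scalerA mulrC !opprD.
by rewrite (AC ((2*2)*2) ((1*3*5)*(2*4*6)))%AC.
Qed.

HB.instance Definition _ phi := GRing.isLinear.Build C 'M[C]_n 'M[C]_n *:%R
  (eig_shift phi) (eig_shift_is_linear phi).

Lemma memv_Espace (phi : R) (X : 'M[C]_n) :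
  (X \in Espace Om phi) = (Om *m X - X *m Om == ('i * phi%:C) *: X).
Proof. by rewrite memv_ker (lfunE (eig_shift phi)) subr_eq0. Qed.

Lemma Espace_mul (phi psi : R) (X Y : 'M[C]_n) :
  X \in Espace Om phi -> Y \in Espace Om psi -> X *m Y \in Espace Om (phi + psi).
Proof.
rewrite !memv_Espace => /eqP EX /eqP EY.
have -> : Om *m (X *m Y) - X *m Y *m Om =
    (Om *m X - X *m Om) *m Y + X *m (Om *m Y - Y *m Om).
  by rewrite mulmxBl mulmxBr !mulmxA addrA subrK.
by rewrite EX EY -scalemxAl -scalemxAr -scalerDl -mulrDr -rmorphD.
Qed.

Lemma Espace_id : Om \in Espace Om 0.
Proof. by rewrite memv_Espace subrr mulr0 scale0r. Qed.

Lemma Espace_adjmx (phi : R) (X : 'M[C]_n) :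
  skew_herm Om -> X \in Espace Om phi -> adjmx X \in Espace Om (- phi).
Proof.
rewrite /skew_herm !memv_Espace => OmN /eqP /(congr1 (@adjmx R n)).
rewrite adjmxB !adjmxM OmN adjmxZ mulmxN mulNmx opprK addrC => ->.
by rewrite rmorphM /= conjCi conjC_real_complex rmorphN mulrN mulNr.
Qed.

End Eigenspace.

Lemma Espace0 n (phi : R) : phi != 0 -> Espace (0 : 'M[C]_n) phi = 0%VS.
Proof.
move=> phi0; apply/vspaceP => X; rewrite memv_Espace memv0 mul0mx mulmx0 subrr.
rewrite eq_sym scaler_eq0 mulf_eq0 (negbTE (neq0Ci C)).
by rewrite (inj_eq (@complexI R)) (negbTE phi0).
Qed.

Definition sl2_gen n (A : 'M[C]_n) (mu : C) :=
  [/\ A != 0, A *m A = 0, A *m adjmx A *m A = mu *: A & 0 < mu].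

Section SeparationIndexOne.
Variables (n : nat) (A : 'M[C]_n).
Hypothesis sepA : sep_index_eq A 1.

Lemma sep_index1_neq0 : A != 0.
Proof.
case: sepA => [[Om [phi [[_ [phi0 _]] _]]] min_dim]; apply/eqP => A0.
have adm0 : sep_admissible A 0 phi.
  by split; [rewrite /skew_herm adjmx0 oppr0 | rewrite A0 mem0v].
by move: (min_dim _ _ adm0); rewrite Espace0 // dimv0.
Qed.

Lemma sep_index1_Espace :
  exists Om phi, [/\ skew_herm Om, phi != 0 & Espace Om phi = <[A]>%VS].
Proof.
case: sepA => [[Om [phi [[OmN [phi0 AE]] dimE]]] _]; exists Om, phi; split => //.
by apply/eqP; rewrite eq_sym eqEdim -memvE AE dim_vline sep_index1_neq0 dimE.
Qed.

Lemma sep_index1_sl2_gen : exists mu, sl2_gen A mu.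
Proof.
have A0 := sep_index1_neq0; have [Om [phi [OmN phi0 EA]]] := sep_index1_Espace.
have memA X : X \in Espace Om phi -> exists k, X = k *: A by rewrite EA => /vlineP.
have AE : A \in Espace Om phi by rewrite EA memv_line.
have c0 : 'i * phi%:C != 0 by rewrite mulf_neq0 ?neq0Ci ?(raddf_eq0 _ (@complexI R)).
have [al AOm] : exists al, A *m Om = al *: A.
  by apply: memA; have := Espace_mul AE (Espace_id Om); rewrite addr0.
have OmA : Om *m A = ('i * phi%:C + al) *: A.
  by move: AE; rewrite memv_Espace AOm subr_eq => /eqP ->; rewrite scalerDl.
have AA : A *m A = 0.
  have := mulmxA A Om A; rewrite OmA AOm -scalemxAr -scalemxAl => /eqP.
  by rewrite scalerDl -subr_eq0 addrK scaler_eq0 (negbTE c0) => /eqP.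
have [mu ADA] : exists mu, A *m adjmx A *m A = mu *: A.
  apply: memA; have := Espace_mul (Espace_mul AE (Espace_adjmx OmN AE)) AE.
  by rewrite subrr add0r.
exists mu; split => //.
have AD0 : A *m adjmx A != 0.
  by apply: contraTneq (mxtrace_mul_adjmx_gt0 A0) => ->; rewrite mxtrace0 ltxx.
have := mxtrace_mul_adjmx_gt0 AD0.
rewrite adjmxM adjmxK mulmxA ADA -scalemxAl mxtraceZ.
by rewrite (pmulr_lgt0 _ (mxtrace_mul_adjmx_gt0 A0)).
Qed.

End SeparationIndexOne.

Section Sl2Combination.
Variables (n : nat) (A : 'M[C]_n).

Definition sl2_comb (u v w : C) := u *: A + v *: adjmx A + w *: lie_br A (adjmx A).

Lemma sl2_comb0 : sl2_comb 0 0 0 = 0.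
Proof. by rewrite /sl2_comb !scale0r !addr0. Qed.

Lemma sl2_combD u v w u' v' w' :
  sl2_comb u v w + sl2_comb u' v' w' = sl2_comb (u + u') (v + v') (w + w').
Proof. by rewrite /sl2_comb !scalerDl addrACA (addrACA (u *: A)). Qed.

Lemma sl2_combZ k u v w : k *: sl2_comb u v w = sl2_comb (k * u) (k * v) (k * w).
Proof. by rewrite /sl2_comb !scalerDr !scalerA. Qed.

Lemma adjmx_sl2_comb u v w : adjmx (sl2_comb u v w) = sl2_comb v^* u^* w^*.
Proof.
rewrite /sl2_comb !adjmxD !adjmxZ adjmxK adjmx_lie_br adjmxK.
by rewrite (addrC (u^* *: _)).
Qed.

Lemma sl2_comb_real_span (a b c : C) :
  sl2_comb (a + 'i * b) (- a + 'i * b) ('i * c) =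
  a *: (A - adjmx A) + b *: ('i *: A + 'i *: adjmx A) + c *: ('i *: lie_br A (adjmx A)).
Proof.
have -> : A - adjmx A = sl2_comb 1 (-1) 0 by rewrite /sl2_comb scale1r scaleN1r scale0r addr0.
have -> : 'i *: A + 'i *: adjmx A = sl2_comb 'i 'i 0 by rewrite /sl2_comb scale0r addr0.
have -> : 'i *: lie_br A (adjmx A) = sl2_comb 0 0 'i by rewrite /sl2_comb !scale0r !add0r.
by rewrite !sl2_combZ !sl2_combD; apply: f_equal3; ring.
Qed.

End Sl2Combination.

Section Sl2Generator.
Variables (n : nat) (A : 'M[C]_n) (mu : C).
Hypothesis genA : sl2_gen A mu.
Local Notation D := (adjmx A).
Local Notation H := (lie_br A (adjmx A)).

Let A_neq0 : A != 0. Proof. by case: genA. Qed.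
Let AA : A *m A = 0. Proof. by case: genA. Qed.
Let ADA : A *m D *m A = mu *: A. Proof. by case: genA. Qed.
Let mu_gt0 : 0 < mu. Proof. by case: genA. Qed.
Let mu_neq0 : mu != 0. Proof. exact: lt0r_neq0. Qed.

Lemma conj_sl2_gen : mu^* = mu.
Proof. exact: conj_Creal (gtr0_real mu_gt0). Qed.

Let DD : D *m D = 0. Proof. by rewrite -adjmxM AA adjmx0. Qed.
Let DAD : D *m A *m D = mu *: D.
Proof.
by move: (congr1 (@adjmx R n) ADA); rewrite !adjmxM adjmxK adjmxZ conj_sl2_gen mulmxA.
Qed.

Let lie_brAH : lie_br A H = - (2 * mu) *: A.
Proof.
rewrite /lie_br mulmxBr mulmxBl !mulmxA AA mul0mx ADA -[D *m A *m A]mulmxA AA.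
by rewrite mulmx0 sub0r subr0 scaleNr mulr_natl mulr2n scalerDl opprD.
Qed.

Let lie_brDH : lie_br D H = (2 * mu) *: D.
Proof.
rewrite /lie_br mulmxBr mulmxBl !mulmxA DD mul0mx DAD -[A *m D *m D]mulmxA DD.
by rewrite mulmx0 subr0 sub0r opprK mulr_natl mulr2n scalerDl.
Qed.

Let lie_brA_comb u v w : lie_br A (sl2_comb A u v w) = sl2_comb A (- (2 * mu) * w) 0 v.
Proof.
rewrite /sl2_comb !lie_brDr !lie_brZr lie_brxx lie_brAH scaler0 scale0r add0r addr0.
by rewrite scalerA addrC mulrC.
Qed.

Let lie_brD_comb u v w : lie_br D (sl2_comb A u v w) = sl2_comb A 0 (2 * mu * w) (- u).
Proof.
rewrite /sl2_comb !lie_brDr !lie_brZr lie_brxx lie_brDH scaler0 scale0r addr0 add0r.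
by rewrite scalerA [lie_br D A]lie_brC scalerN scaleNr addrC mulrC.
Qed.

Let lie_brH_comb u v w :
  lie_br H (sl2_comb A u v w) = sl2_comb A (2 * mu * u) (- (2 * mu) * v) 0.
Proof.
rewrite /sl2_comb !lie_brDr !lie_brZr lie_brxx [lie_br H A]lie_brC [lie_br H D]lie_brC.
rewrite lie_brAH lie_brDH scaler0 scale0r !addr0 scaleNr opprK !scalerN !scalerA.
by rewrite -scaleNr [u * _]mulrC [v * _]mulrC mulNr.
Qed.

Lemma lie_br_sl2_comb u v w u' v' w' :
  lie_br (sl2_comb A u v w) (sl2_comb A u' v' w') =
  sl2_comb A (2 * mu * (w * u' - u * w')) (2 * mu * (v * w' - w * v')) (u * v' - v * u').
Proof.
rewrite {1}/sl2_comb !lie_brDl !lie_brZl lie_brA_comb lie_brD_comb lie_brH_comb.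
by rewrite !sl2_combZ !sl2_combD; apply: f_equal3; ring.
Qed.

Let mxtrace_mu_eq0 (X : 'M[C]_n) : \tr (mu *: X) = 0 -> \tr X = 0.
Proof. by rewrite mxtraceZ => /eqP; rewrite mulf_eq0 (negbTE mu_neq0) => /eqP. Qed.

Let trA : \tr A = 0.
Proof. by apply: mxtrace_mu_eq0; rewrite -ADA mxtrace_mulC mulmxA AA mul0mx mxtrace0. Qed.

Let trD : \tr D = 0.
Proof. by apply: mxtrace_mu_eq0; rewrite -DAD mxtrace_mulC mulmxA DD mul0mx mxtrace0. Qed.

Lemma mxtrace_sl2_comb u v w : \tr (sl2_comb A u v w) = 0.
Proof. by rewrite /sl2_comb !mxtraceD !mxtraceZ trA trD mxtrace_lie_br !mulr0 !addr0. Qed.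

Let mxtrace_sl2_comb_mul u v w (X : 'M[C]_n) :
  \tr (sl2_comb A u v w *m X) = u * \tr (A *m X) + v * \tr (D *m X) + w * \tr (H *m X).
Proof. by rewrite /sl2_comb 2!mulmxDl 2!mxtraceD -!scalemxAl !mxtraceZ. Qed.

Let trHA : \tr (H *m A) = 0.
Proof.
by rewrite /lie_br mulmxBl raddfB /= ADA -mulmxA AA mulmx0 mxtraceZ trA mulr0 mxtrace0 subr0.
Qed.

Let trHD : \tr (H *m D) = 0.
Proof.
by rewrite /lie_br mulmxBl raddfB /= DAD -mulmxA DD mulmx0 mxtraceZ trD mulr0 mxtrace0 subr0.
Qed.

Let trHH : \tr (H *m H) = 2 * mu * \tr (A *m D).
Proof.
rewrite {1}/lie_br mulmxBl !mulmxBr !mulmxA ADA -(mulmxA D A A) -(mulmxA A D D) AA DD.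
rewrite !mulmx0 DAD -!scalemxAl !raddfB /= !mxtraceZ [\tr (D *m A)]mxtrace_mulC !mul0mx.
by rewrite mxtrace0; ring.
Qed.

Definition sl2_transfer m (B : 'M[C]_m) (X : 'M[C]_n) :=
  let t := \tr (A *m D) in
  sl2_comb B (\tr (X *m D) / t) (\tr (X *m A) / t) (\tr (X *m H) / (2 * mu * t)).

Lemma sl2_transfer_comb m (B : 'M[C]_m) u v w :
  sl2_transfer B (sl2_comb A u v w) = sl2_comb B u v w.
Proof.
have t_neq0 : \tr (A *m D) != 0 by rewrite lt0r_neq0 ?mxtrace_mul_adjmx_gt0.
have mut_neq0 : 2 * mu * \tr (A *m D) != 0 by rewrite !mulf_neq0 ?pnatr_eq0.
rewrite /sl2_transfer !mxtrace_sl2_comb_mul AA DD !mxtrace0 trHA trHD trHH.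
rewrite [\tr (A *m H)]mxtrace_mulC [\tr (D *m H)]mxtrace_mulC trHA trHD.
by rewrite [\tr (D *m A)]mxtrace_mulC !mulr0 !addr0 !add0r !mulfK.
Qed.

Lemma sl2_transfer_linear m (B : 'M[C]_m) (r s : C) X Y :
  sl2_transfer B (r *: X + s *: Y) = r *: sl2_transfer B X + s *: sl2_transfer B Y.
Proof.
rewrite /sl2_transfer !sl2_combZ sl2_combD; apply: f_equal3;
  by rewrite !mulmxDl -!scalemxAl mxtraceD !mxtraceZ; ring.
Qed.

End Sl2Generator.

Lemma gen_real_lie_subalg n (G : 'M[C]_n -> Prop) : real_lie_subalg (gen_real_lie G).
Proof.
split; [|split; [|split]] => [S [S0 _] _ //|X Y gX gY|r X gX|X Y gX gY] S SS GS;
  have [_ [SD [SZ SB]]] := SS.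
- by apply: SD; [apply: gX | apply: gY].
- by apply: SZ; apply: gX.
- by apply: SB; [apply: gX | apply: gY].
Qed.

Lemma gen_real_lie_base n (G : 'M[C]_n -> Prop) X : G X -> gen_real_lie G X.
Proof. by move=> GX S _; apply. Qed.

Lemma real_lie_iso_ext n m (L L' : 'M[C]_n -> Prop) (M M' : 'M[C]_m -> Prop) :
  (forall X, L' X <-> L X) -> (forall Z, M' Z <-> M Z) ->
  real_lie_iso L M -> real_lie_iso L' M'.
Proof.
move=> LL MM [f [fM [finj [fsurj [flin fbr]]]]]; exists f.
split; [|split; [|split; [|split]]].
- by move=> X /LL /fM /MM.
- by move=> X Y /LL LX /LL LY; apply: finj.
- by move=> Z /MM /fsurj [X [/LL LX fX]]; exists X.
- by move=> r s X Y /LL LX /LL LY; apply: flin.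
- by move=> X Y /LL LX /LL LY; apply: fbr.
Qed.

Definition su2_gens n (A : 'M[C]_n) (X : 'M[C]_n) : Prop :=
  X = A - adjmx A \/ X = 'i *: A + 'i *: adjmx A \/ X = 'i *: lie_br A (adjmx A).

Definition su2_form n (A : 'M[C]_n) (X : 'M[C]_n) : Prop :=
  exists u w, w^* = - w /\ X = sl2_comb A u (- u^*) w.

Section RealForm.
Variables (n : nat) (A : 'M[C]_n) (mu : C).
Hypothesis genA : sl2_gen A mu.

Lemma su2_form_subalg : real_lie_subalg (su2_form A).
Proof.
split; [|split; [|split]].
- by exists 0, 0; rewrite rmorph0 oppr0 sl2_comb0.
- move=> _ _ [u [w [w_im ->]]] [u' [w' [w'_im ->]]]; exists (u + u'), (w + w').
  by rewrite sl2_combD !rmorphD /= w_im w'_im !opprD.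
- move=> r _ [u [w [w_im ->]]]; exists (r%:C * u), (r%:C * w).
  by rewrite sl2_combZ !rmorphM /= conjC_real_complex w_im !mulrN.
- move=> _ _ [u [w [w_im ->]]] [u' [w' [w'_im ->]]].
  have mu_real := conj_sl2_gen genA.
  exists (2 * mu * (w * u' - u * w')), (u * - u'^* - - u^* * u').
  rewrite (lie_br_sl2_comb genA); split; last apply: f_equal3.
  all: by rewrite ?(rmorphM, rmorphB, rmorphN) /= ?conjCK ?rmorph_nat ?w_im ?w'_im ?mu_real; ring.
Qed.

Lemma gen_real_lie_su2_form X : gen_real_lie (su2_gens A) X <-> su2_form A X.
Proof.
split.
- move=> genX; apply: genX su2_form_subalg _ => _ [->|[->|->]].
  + exists 1, 0; split; first by rewrite rmorph0 oppr0.
    by rewrite /sl2_comb rmorph1 scale1r scaleN1r scale0r addr0.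
  + exists 'i, 0; split; first by rewrite rmorph0 oppr0.
    by rewrite /sl2_comb conjCi opprK scale0r addr0.
  + exists 0, 'i; split; first by rewrite conjCi.
    by rewrite /sl2_comb rmorph0 oppr0 !scale0r !add0r.
case=> u [w [w_im ->]].
have -> : w = 'i * (complex.Im w)%:C.
  by rewrite complexIm {1}[w]Crect ReE w_im subrr mul0r add0r.
rewrite [u]complexE rmorphD rmorphM /= conjCi !conjC_real_complex opprD mulNr opprK.
have [_ [genD [genZ _]]] := gen_real_lie_subalg (su2_gens A).
rewrite sl2_comb_real_span; apply: (genD); [apply: (genD)|]; apply: (genZ).
all: by apply: gen_real_lie_base; rewrite /su2_gens; auto.
Qed.

End RealForm.

Lemma sl2_gen_iso n m (A : 'M[C]_n) (B : 'M[C]_m) mu :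
  sl2_gen A mu -> sl2_gen B mu -> real_lie_iso (su2_form A) (su2_form B).
Proof.
move=> genA genB; exists (sl2_transfer A mu B).
split; [|split; [|split; [|split]]].
- by move=> _ [u [w [w_im ->]]]; rewrite (sl2_transfer_comb genA); exists u, w.
- move=> _ _ [u [w [_ ->]]] [u' [w' [_ ->]]].
  rewrite !(sl2_transfer_comb genA) => /(congr1 (sl2_transfer B mu A)).
  by rewrite !(sl2_transfer_comb genB).
- move=> _ [u [w [w_im ->]]]; exists (sl2_comb A u (- u^*) w).
  by rewrite (sl2_transfer_comb genA); split => //; exists u, w.
- by move=> r s X Y _ _; apply: sl2_transfer_linear.
- move=> _ _ [u [w [_ ->]]] [u' [w' [_ ->]]].
  by rewrite (lie_br_sl2_comb genA) !(sl2_transfer_comb genA) (lie_br_sl2_comb genB).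
Qed.

Section Su2Model.
Variable mu : C.
Hypothesis mu_gt0 : 0 < mu.
Local Notation s := (sqrtC mu).

Definition sl2_model : 'M[C]_2 := s *: delta_mx 0 1.

Let conj_s : s^* = s. Proof. exact: conj_Creal (sqrtC_real (ltW mu_gt0)). Qed.
Let s_neq0 : s != 0. Proof. by rewrite sqrtC_eq0 lt0r_neq0. Qed.
Let ss : s * s = mu. Proof. by rewrite -expr2 sqrtCK. Qed.
Let conj_mu : mu^* = mu. Proof. exact: conj_Creal (gtr0_real mu_gt0). Qed.

Let mulmxZZ (a b : C) (X Y : 'M[C]_2) : (a *: X) *m (b *: Y) = (a * b) *: (X *m Y).
Proof. by rewrite -scalemxAl -scalemxAr scalerA. Qed.

Let adjmx_model : adjmx sl2_model = s *: delta_mx 1 0.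
Proof.
by rewrite adjmxZ conj_s; congr (_ *: _); apply/matrixP => i j; rewrite !mxE rmorph_nat andbC.
Qed.

Lemma sl2_gen_model : sl2_gen sl2_model mu.
Proof.
split => //.
- apply: contraNneq s_neq0 => /matrixP/(_ 0 1); rewrite !mxE => <-.
  by rewrite !eqxx mulr1.
- by rewrite mulmxZZ mul_delta_mx_0 ?scaler0.
- by rewrite adjmx_model /sl2_model !mulmxZZ !mul_delta_mx ss scalerA.
Qed.

Let sl2_comb_modelE u v w : sl2_comb sl2_model u v w =
  (u * s) *: delta_mx 0 1 + (v * s) *: delta_mx 1 0 +
  (w * mu) *: (delta_mx 0 0 - delta_mx 1 1).
Proof.
rewrite /sl2_comb adjmx_model /lie_br /sl2_model !mulmxZZ !mul_delta_mx ss -scalerBr.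
by rewrite !scalerA.
Qed.

Lemma su2_form_model X : su2 X <-> su2_form sl2_model X.
Proof.
split; last first.
  case=> u [w [w_im ->]]; split; last exact: mxtrace_sl2_comb sl2_gen_model _ _ _.
  rewrite /skew_herm adjmx_sl2_comb -[- sl2_comb _ _ _ _]scaleN1r sl2_combZ.
  rewrite rmorphN /= conjCK w_im.
  by apply: f_equal3; ring.
case=> X_skew X_tr.
have X_adj i j : (X j i)^* = - X i j.
  by have := congr1 (fun Y : 'M[C]_2 => Y i j) X_skew; rewrite !mxE.
have X11 : X 1 1 = - X 0 0 by apply/eqP; rewrite -addr_eq0 addrC -mxtrace2 X_tr.
exists (X 0 1 / s), (X 0 0 / mu); split.
  by rewrite fmorph_div /= conj_mu X_adj mulNr.
have mu_neq0 : mu != 0 by rewrite lt0r_neq0.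
apply: matrix2P; rewrite sl2_comb_modelE !mxE /= fmorph_div /= conj_s X_adj ?X11.
all: by field; rewrite ?s_neq0 ?mu_neq0.
Qed.

End Su2Model.

End Theory.

Unset Implicit Arguments.

Theorem proposition2p26 (R : realType) (N : nat) (A : 'M[R[i]]_N) :
  sep_index_eq A 1 ->
  real_lie_iso
    (gen_real_lie (fun X => X = A - adjmx A \/
                            X = ('i)%C *: A + ('i)%C *: adjmx A \/
                            X = ('i)%C *: lie_br A (adjmx A)))
    (@su2 R).
Proof.
move=> sepA; have [mu genA] := sep_index1_sl2_gen sepA.
have mu_gt0 : 0 < mu by case: genA.
apply: (real_lie_iso_ext (gen_real_lie_su2_form genA) (su2_form_model mu_gt0)).
exact: sl2_gen_iso genA (sl2_gen_model mu_gt0).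
Qed.
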